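(* Let $C\subseteq\{0,1\}^n$ be a linear code with dual distance $\Gamma$ and $|C|\leq 2^{\frac{1}{64}n}$, let $\epsilon<1/8$, and let $C'\subseteq C$ be nonempty such that $C$ is $C'$-partially testable with $q$ (possibly adaptive) queries for proximity parameter $\epsilon$. If $X\sim U(C')$, then $H[X]\leq\log|C|-\left\lfloor\frac{1}{32}\Gamma/q\right\rfloor$.
   Context: A linear code is an $\mathbb{F}_2$-subspace of $\{0,1\}^n$; its dual distance is the minimum Hamming weight of a nonzero vector of its dual code $C^\perp$. Distance is normalized Hamming distance, $d(x,C)=\min_{c\in C}|\{i:x_i\neq c_i\}|/n$. $C$ is $C'$-partially testable with $q$ adaptive queries if there is a randomized algorithm that, given query access to $x\in\{0,1\}^n$, queries at most $q$ bits of $x$ (each query may depend on the answers to previous queries) and outputs accept/reject, such that every $x\in C'$ is accepted with probability at least $2/3$ and every $x$ with $d(x,C)>\epsilon$ is rejected with probability at least $2/3$. $U(C')$ is the uniform distribution on $C'$; $H$ is Shannon entropy with base-2 logarithms and $\log$ is base 2. *)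

From HB Require Import structures.
From mathcomp Require Import all_boot all_order all_algebra.
From mathcomp Require Import reals exp.
Set Implicit Arguments. Unset Strict Implicit. Unset Printing Implicit Defensive.
Import Order.TTheory GRing.Theory Num.Theory.
Local Open Scope ring_scope.

(* Binary words of length n: row vectors over F_2. A linear code is an
   F_2-subspace, i.e. a {vspace 'rV['F_2]_n}. *)
Notation word n := 'rV['F_2]_n.

Definition wt n (x : word n) : nat := #|[set i : 'I_n | x ord0 i != 0]|.
Definition ham n (x y : word n) : nat := #|[set i : 'I_n | x ord0 i != y ord0 i]|.

Definition dual_code n (C : {vspace word n}) : {set word n} :=
  [set y : word n | [forall x : word n, (x \in C) ==> ((x *m y^T) ord0 ord0 == 0)]].

Definition has_dual_distance n (C : {vspace word n}) (G : nat) : Prop :=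
  (exists2 y, (y \in dual_code C) && (y != 0) & wt y = G) /\
  (forall y, y \in dual_code C -> y != 0 -> (G <= wt y)%N).

Definition dist_code (R : realType) n (x : word n) (C : {vspace word n}) : R :=
  (\big[minn/n]_(c : word n | c \in C) ham x c)%:R / n%:R.

(* Deterministic adaptive query algorithms = decision trees: a node queries
   bit i of x and continues in t0 or t1 according to the answer; a leaf
   outputs accept (true) / reject (false). *)
Inductive dtree (n : nat) : Type :=
| Leaf of bool
| Query of 'I_n & dtree n & dtree n.

Fixpoint depth n (t : dtree n) : nat :=
  match t with
  | Leaf _ => 0
  | Query _ t0 t1 => (maxn (depth t0) (depth t1)).+1
  end.

Fixpoint run n (t : dtree n) (x : word n) : bool :=
  match t with
  | Leaf b => b
  | Query i t0 t1 => if x ord0 i == 1 then run t1 x else run t0 x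
  end.

(* A randomized algorithm with at most q adaptive queries: a probability
   distribution (finitely supported) over decision trees of depth <= q. *)
Definition rand_alg (R : realType) n := seq (R * dtree n).

Definition valid_alg (R : realType) n (A : rand_alg R n) (q : nat) : Prop :=
  all (fun p : R * dtree n => (0 <= p.1) && (depth p.2 <= q)%N) A /\
  \sum_(p <- A) p.1 = 1.

Definition acc_prob (R : realType) n (A : rand_alg R n) (x : word n) : R :=
  \sum_(p <- A) p.1 * (run p.2 x)%:R.

Definition partially_testable (R : realType) n (C : {vspace word n})
    (C' : {set word n}) (q : nat) (eps : R) : Prop :=
  exists A : rand_alg R n, valid_alg A q /\
    (forall x, x \in C' -> 2/3 <= acc_prob A x) /\
    (forall x, eps < dist_code R x C -> 2/3 <= 1 - acc_prob A x).

Definition log2 (R : realType) (x : R) : R := ln x / ln 2.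

Definition entropy (R : realType) (T : finType) (p : T -> R) : R :=
  - \sum_(x : T) (if p x == 0 then 0 else p x * log2 (p x)).

Definition unif (R : realType) (T : finType) (S : {set T}) : T -> R :=
  fun x => if x \in S then (#|S|%:R)^-1 else 0.

(* The acceptance probability p of a q-query tester is a linear combination of
   indicators of subcubes of codimension at most q, so (3p)^m is one of
   codimension at most mq.  A linear code of dual distance G is (G-1)-wise
   independent, hence for mq < G the average of (3p)^m over C equals its average
   over the whole cube.  On C' we have (3p)^m >= 2^m, while on the cube
   (3p)^m <= 1 except at the words eps-close to C, which are few because C is
   small.  With m = 2k this gives |C'| 2^k <= |C|, and H[U(C')] = log |C'|. *)

From HB Require Import structures.
From mathcomp Require Import all_boot all_order all_algebra.
From mathcomp Require Import reals exp.
From mathcomp Require Import lra zify ring.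
Set Implicit Arguments. Unset Strict Implicit. Unset Printing Implicit Defensive.
Import Order.TTheory GRing.Theory Num.Theory.
Local Open Scope ring_scope.

Lemma F2_cases (z : 'F_2) : z = 0 \/ z = 1.
Proof. by case: z => [[|[|m]]] //= ?; [left|right]; apply/val_inj. Qed.

Lemma F2_neq0 (z : 'F_2) : z != 0 -> z = 1.
Proof. by case: (F2_cases z) => ->. Qed.

Lemma F2_addr_neq (u v : 'F_2) : u + (u != v)%:R = v.
Proof. by case: (F2_cases u) => ->; case: (F2_cases v) => ->; apply/val_inj. Qed.

Lemma word_addrr n (x : word n) : x + x = 0.
Proof. by apply/matrixP => i j; rewrite !mxE (addrr_pchar2 (pchar_Fp _)). Qed.

Definition dot n (x y : word n) : 'F_2 := (x *m y^T) ord0 ord0.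

Lemma dotE n (x y : word n) : dot x y = \sum_j x ord0 j * y ord0 j.
Proof. by rewrite /dot mxE; apply: eq_bigr => j _; rewrite mxE. Qed.

Lemma dotC n (x y : word n) : dot x y = dot y x.
Proof. by rewrite !dotE; apply: eq_bigr => j _; rewrite mulrC. Qed.

Lemma dotDl n (x z y : word n) : dot (x + z) y = dot x y + dot z y.
Proof. by rewrite /dot mulmxDl mxE. Qed.

Lemma dotBl n (x z y : word n) : dot (x - z) y = dot x y + dot z y.
Proof. by rewrite /dot mulmxBl !mxE (oppr_pchar2 (pchar_Fp _)). Qed.

Lemma dot0l n (y : word n) : dot 0 y = 0.
Proof. by rewrite /dot mul0mx mxE. Qed.

Lemma dot_unit n (i : 'I_n) (z : word n) : dot 'e_i z = z ord0 i.
Proof. by rewrite /dot -rowE !mxE. Qed.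

Definition chi (R : realType) (z : 'F_2) : R := if z == 0 then 1 else -1.

Lemma chiD (R : realType) (u v : 'F_2) : chi R (u + v) = chi R u * chi R v.
Proof.
by case: (F2_cases u) => ->; case: (F2_cases v) => ->;
  rewrite /chi ?addr0 ?add0r ?(addrr_pchar2 (pchar_Fp _)) ?eqxx /= ?mulrNN ?mulr1 ?mul1r.
Qed.

Definition orthogonal_to n (P : {set word n}) (y : word n) : bool :=
  [forall x in P, dot x y == 0].

Lemma sum_chi_dot (R : realType) n (P : {set word n}) (y : word n) :
  {in P &, forall u v, u + v \in P} ->
  \sum_(x in P) chi R (dot x y) = if orthogonal_to P y then #|P|%:R else 0.
Proof.
move=> addP; case: ifP => [/forall_inP orth|/negbT].
  rewrite (eq_bigr (fun _ => 1)) ?sumr_const // => x /orth /eqP ->.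
  by rewrite /chi eqxx.
rewrite negb_forall_in => /exists_inP [x0 Px0 /F2_neq0 x0y].
set s := \sum_(x in P) _.
suff : s = - s by move=> h; lra.
rewrite {1}/s (reindex_inj (addIr x0)) /= /s -sumrN; apply: eq_big => x.
  apply/idP/idP => [Px|Px]; last exact: addP.
  by have := addP _ _ Px Px0; rewrite -addrA word_addrr addr0.
by move=> _; rewrite dotDl chiD x0y /chi /= mulrN1.
Qed.

Definition agree_on n (S : {set 'I_n}) (x a : word n) : bool :=
  [forall i in S, x ord0 i == a ord0 i].

Definition subcube (R : realType) n (S : {set 'I_n}) (a x : word n) : R :=
  (agree_on S x a)%:R.

Definition supported_on n (S : {set 'I_n}) : {set word n} :=
  [set y : word n | [forall i, (i \notin S) ==> (y ord0 i == 0)]].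

(* For a linear code P this is d-wise independence: a uniform element of P is
   uniform on every set of at most d coordinates (see sum_subcube). *)
Definition wise_independent n (P : {set word n}) (d : nat) : Prop :=
  forall y, orthogonal_to P y -> (wt y <= d)%N -> y = 0.

Lemma wise_independentW n (P : {set word n}) d d' :
  (d' <= d)%N -> wise_independent P d -> wise_independent P d'.
Proof. by move=> d'd indP y orth wty; apply: indP orth (leq_trans wty d'd). Qed.

Lemma supported0 n (S : {set 'I_n}) : 0 \in supported_on S.
Proof. by rewrite inE; apply/forallP => i; rewrite mxE implybT. Qed.

Lemma addr_supported n (S : {set 'I_n}) :
  {in supported_on S &, forall u v, u + v \in supported_on S}.
Proof.
move=> u v; rewrite !inE => /forallP uS /forallP vS; apply/forallP => i.
apply/implyP => iS; rewrite mxE.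
by rewrite (eqP (implyP (uS i) iS)) (eqP (implyP (vS i) iS)) addr0.
Qed.

Lemma unit_supported n (S : {set 'I_n}) i : i \in S -> 'e_i \in supported_on S.
Proof.
move=> iS; rewrite inE; apply/forallP => j; apply/implyP => jS.
by rewrite mxE eqxx; case: (j =P i) => [ji|//]; rewrite ji iS in jS.
Qed.

Lemma wt_supported n (S : {set 'I_n}) y : y \in supported_on S -> (wt y <= #|S|)%N.
Proof.
rewrite inE => /forallP yS; apply: subset_leq_card; apply/subsetP => i.
by rewrite inE; apply: contraR => iS; rewrite (eqP (implyP (yS i) iS)).
Qed.

Lemma subcube_fourier (R : realType) n (S : {set 'I_n}) (a x : word n) :
  \sum_(y in supported_on S) chi R (dot y (x - a)) =
    #|supported_on S|%:R * subcube R S a x.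
Proof.
rewrite sum_chi_dot; last exact: addr_supported.
rewrite /subcube /orthogonal_to; case: ifP => [/forall_inP orth|/negbT not_orth].
  suff -> : agree_on S x a by rewrite mulr1.
  apply/forall_inP => i iS; have := orth _ (unit_supported iS).
  by rewrite dot_unit !mxE subr_eq0.
case: (boolP (agree_on S x a)) => [/forall_inP agree|_]; last by rewrite mulr0.
case/negP: not_orth; apply/forall_inP => y; rewrite inE => /forallP yS.
rewrite dotE big1 // => j _; case: (boolP (j \in S)) => jS.
  by rewrite !mxE (eqP (agree _ jS)) subrr mulr0.
by rewrite (eqP (implyP (yS j) jS)) mul0r.
Qed.

Lemma sum_subcube (R : realType) n (P : {set word n}) (S : {set 'I_n}) (a : word n) :
  {in P &, forall u v, u + v \in P} -> wise_independent P #|S| ->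
  (\sum_(x in P) subcube R S a x) * #|supported_on S|%:R = #|P|%:R.
Proof.
move=> addP indP.
have expand x : subcube R S a x * #|supported_on S|%:R =
    \sum_(y in supported_on S) chi R (dot x y) * chi R (dot y a).
  rewrite mulrC -subcube_fourier; apply: eq_bigr => y _.
  by rewrite dotC dotBl chiD (dotC a).
rewrite mulr_suml (eq_bigr _ (fun x _ => expand x)) exchange_big /=.
under eq_bigr => y _ do rewrite -mulr_suml sum_chi_dot //.
rewrite (bigD1 0) ?supported0 //= [X in _ + X]big1 ?addr0 => [|y /andP [yS y0]].
  rewrite ifT ?dot0l /chi ?eqxx ?mulr1 //.
  by apply/forall_inP => x _; rewrite dotC dot0l.
case: ifP => [orth|_]; last by rewrite mul0r.
by rewrite (indP y orth (wt_supported yS)) eqxx in y0.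
Qed.

(* These are exactly the functions of Fourier degree at most d. *)
Definition subcube_comb (R : realType) n (d : nat) (f : word n -> R) : Prop :=
  exists s : seq (R * {set 'I_n} * word n),
    all (fun e : R * {set 'I_n} * word n => #|e.1.2| <= d)%N s /\
    forall x, f x = \sum_(e <- s) e.1.1 * subcube R e.1.2 e.2 x.

Section SubcubeCombinations.
Variables (R : realType) (n : nat).
Implicit Types (f g : word n -> R) (S T : {set 'I_n}) (a b x : word n).

Lemma subcube_combW d d' f : (d <= d')%N -> subcube_comb d f -> subcube_comb d' f.
Proof.
move=> dd' [s [sd fE]]; exists s; split => //.
by apply/allP => e /(allP sd) /leq_trans; apply.
Qed.

Lemma eq_subcube_comb d f g : f =1 g -> subcube_comb d f -> subcube_comb d g.
Proof. by move=> fg [s [sd fE]]; exists s; split => // x; rewrite -fg. Qed.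

Lemma subcube_comb_subcube S a : subcube_comb #|S| (subcube R S a).
Proof. by exists [:: (1, S, a)]; split; rewrite /= ?leqnn // => x; rewrite big_seq1 mul1r. Qed.

Lemma subcube_comb_cst d (c : R) : subcube_comb d (fun _ : word n => c).
Proof.
exists [:: (c, set0, 0)]; split; first by rewrite /= cards0.
move=> x; rewrite big_seq1 /subcube /agree_on /=.
by case: forall_inP => [_|[] i]; rewrite ?inE ?mulr1.
Qed.

Lemma subcube_combD d f g :
  subcube_comb d f -> subcube_comb d g -> subcube_comb d (fun x => f x + g x).
Proof.
move=> [s [sd fE]] [t [td gE]]; exists (s ++ t); split; first by rewrite all_cat sd td.
by move=> x; rewrite big_cat fE gE.
Qed.

Lemma subcube_combZ d (c : R) f : subcube_comb d f -> subcube_comb d (fun x => c * f x).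
Proof.
move=> [s [sd fE]]; exists [seq (c * e.1.1, e.1.2, e.2) | e <- s]; split.
  by rewrite all_map.
by move=> x; rewrite fE big_map mulr_sumr; apply: eq_bigr => e _; rewrite mulrA.
Qed.

Definition splice S a b : word n := \row_i (if i \in S then a ord0 i else b ord0 i).

Lemma subcubeM S T a b x :
  subcube R S a x * subcube R T b x =
    (agree_on (S :&: T) a b)%:R * subcube R (S :|: T) (splice S a b) x.
Proof.
rewrite /subcube -!natrM !mulnb; congr ((nat_of_bool _)%:R); apply/idP/idP.
  case/andP => /forall_inP xaS /forall_inP xbT; apply/andP; split.
    apply/forall_inP => i; rewrite inE => /andP [iS iT].
    by rewrite -(eqP (xaS _ iS)) (eqP (xbT _ iT)).
  apply/forall_inP => i; rewrite inE mxE; case: ifP => [iS _|_ /= iT].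
    exact: xaS.
  exact: xbT.
case/andP => /forall_inP abST /forall_inP xST; apply/andP; split.
  by apply/forall_inP => i iS; have := xST i; rewrite inE iS mxE iS; apply.
apply/forall_inP => i iT; have := xST i; rewrite inE iT orbT mxE => /(_ isT) /eqP ->.
by case: ifP => // iS; apply: abST; rewrite inE iS.
Qed.

Lemma subcube_combM d1 d2 f g : subcube_comb d1 f -> subcube_comb d2 g ->
  subcube_comb (d1 + d2) (fun x => f x * g x).
Proof.
move=> [s [sd fE]] [t [td gE]].
exists [seq (e1.1.1 * e2.1.1 * (agree_on (e1.1.2 :&: e2.1.2) e1.2 e2.2)%:R,
             e1.1.2 :|: e2.1.2, splice e1.1.2 e1.2 e2.2) | e1 <- s, e2 <- t].
split.
  apply/allP => e /allpairsP [[e1 e2] /= [e1s e2t ->]] /=.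
  apply: leq_trans (leq_card_setU _ _) _.
  by apply: leq_add; [exact: (allP sd _ e1s) | exact: (allP td _ e2t)].
move=> x; rewrite big_allpairs_dep fE gE mulr_suml; apply: eq_bigr => e1 _.
rewrite mulr_sumr; apply: eq_bigr => e2 _ /=.
by rewrite mulrACA subcubeM mulrA.
Qed.

Lemma subcube_combX d f m : subcube_comb d f -> subcube_comb (m * d) (fun x => f x ^+ m).
Proof.
move=> fd; elim: m => [|m IH]; first exact: eq_subcube_comb (subcube_comb_cst 0 1).
by apply: eq_subcube_comb (subcube_combM fd IH) => x; rewrite exprS.
Qed.

Lemma subcube_comb_run (t : dtree n) :
  subcube_comb (depth t) (fun x => (run t x)%:R : R).
Proof.
elim: t => [b|i t0 IH0 t1 IH1] /=; first exact: subcube_comb_cst.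
have bit x b : subcube R [set i] b x = (x ord0 i == b ord0 i)%:R.
  rewrite /subcube /agree_on; congr ((nat_of_bool _)%:R); apply/forall_inP/idP => [|/eqP xb j].
    by apply; rewrite inE.
  by rewrite inE => /eqP ->; rewrite xb.
have runE x : ((if x ord0 i == 1 then run t1 x else run t0 x)%:R : R) =
    subcube R [set i] (const_mx 1) x * (run t1 x)%:R +
    subcube R [set i] 0 x * (run t0 x)%:R.
  rewrite !bit !mxE.
  by case: (F2_cases (x ord0 i)) => ->; rewrite /= ?mul1r ?mul0r ?addr0 ?add0r.
apply: eq_subcube_comb (fun x => esym (runE x)) _.
apply: subcube_combD.
  apply: subcube_combW (subcube_combM (subcube_comb_subcube _ _) IH1).
  by rewrite cards1 add1n ltnS leq_maxr.
apply: subcube_combW (subcube_combM (subcube_comb_subcube _ _) IH0).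
by rewrite cards1 add1n ltnS leq_maxl.
Qed.

Lemma subcube_comb_acc_prob (A : rand_alg R n) q :
  all (fun t : R * dtree n => (depth t.2 <= q)%N) A -> subcube_comb q (acc_prob A).
Proof.
rewrite /acc_prob; elim: A => [|t A IH] /=.
  by move=> _; apply: eq_subcube_comb (subcube_comb_cst q 0) => x; rewrite big_nil.
case/andP => tq /IH Aq.
have tq' := subcube_combZ t.1 (subcube_combW tq (subcube_comb_run t.2)).
by apply: eq_subcube_comb (subcube_combD tq' Aq) => x; rewrite big_cons.
Qed.

Lemma sum_subcube_comb (P Q : {set word n}) d f :
  {in P &, forall u v, u + v \in P} -> {in Q &, forall u v, u + v \in Q} ->
  wise_independent P d -> wise_independent Q d -> subcube_comb d f ->
  (\sum_(x in P) f x) * #|Q|%:R = #|P|%:R * \sum_(x in Q) f x.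
Proof.
move=> addP addQ indP indQ [s [sd fE]].
rewrite (eq_bigr _ (fun x _ => fE x)) [in RHS](eq_bigr _ (fun x _ => fE x)).
rewrite exchange_big [in RHS]exchange_big /= mulr_suml mulr_sumr.
rewrite big_seq_cond [in RHS]big_seq_cond; apply: eq_bigr => e /andP [es _].
have Sd := allP sd _ es.
have sumP := sum_subcube R e.2 addP (wise_independentW Sd indP).
have sumQ := sum_subcube R e.2 addQ (wise_independentW Sd indQ).
have V0 : #|supported_on e.1.2|%:R != 0 :> R.
  by rewrite pnatr_eq0 -lt0n card_gt0; apply/set0Pn; exists 0; apply: supported0.
by apply: (mulIf V0); rewrite -!mulr_sumr -sumQ -sumP; ring.
Qed.

End SubcubeCombinations.

Lemma wise_independent_setT n d : wise_independent [set: word n] d.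
Proof.
move=> y /forall_inP orth _; apply/matrixP => i j; rewrite (ord1 i) mxE.
by have := orth 'e_j (in_setT _); rewrite dot_unit => /eqP.
Qed.

Lemma dual_distance_wise_independent n (C : {vspace word n}) G d :
  has_dual_distance C G -> (d < G)%N -> wise_independent [set c | c \in C] d.
Proof.
move=> [_ minG] dG y /forall_inP orth wty; apply/eqP; apply: contraTT dG => y0.
rewrite -leqNgt; apply: leq_trans (minG y _ y0) wty.
by rewrite inE; apply/forallP => x; apply/implyP => xC; apply: orth; rewrite inE.
Qed.

Lemma sum_expn_card_subsets n : (\sum_(A : {set 'I_n}) 7 ^ (n - #|A|) = 8 ^ n)%N.
Proof.
have cardA (A : {set 'I_n}) : (#|A| < n.+1)%N.
  by rewrite ltnS; apply: leq_trans (max_card _) _; rewrite card_ord.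
rewrite -[8%N]/(7 + 1)%N expnDn.
rewrite (partition_big (fun A : {set 'I_n} => inord #|A| : 'I_n.+1) predT) //=.
apply: eq_bigr => i _; rewrite exp1n muln1.
rewrite (eq_bigr (fun _ => 7 ^ (n - i))%N) => [|A /eqP <-]; last by rewrite inordK.
rewrite sum_nat_const; congr (_ * _)%N.
rewrite -[X in 'C(X, _)](card_ord n) -card_draws; apply: eq_card => A.
rewrite inE /=; apply/eqP/eqP => [<-|->]; last by rewrite inord_val.
by rewrite inordK.
Qed.

Lemma card_small_subsets n :
  (#|[set A : {set 'I_n} | (8 * #|A| < n)%N]| * 7 ^ (n - n %/ 8) <= 8 ^ n)%N.
Proof.
rewrite -sum_expn_card_subsets -sum_nat_const.
rewrite [X in (_ <= X)%N](bigID (mem [set A : {set 'I_n} | (8 * #|A| < n)%N])) /=.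
apply: leq_trans (leq_addr _ _); apply: leq_sum => A.
by rewrite inE => A_small; rewrite leq_exp2l // leq_sub2l // leq_divRL //; lia.
Qed.

(* Raised to the 64th power, this reduces to 81 * 2 * 8^64 <= 2^64 * 7^56. *)
Lemma card_near_arith (n k c B : nat) : (c ^ 64 <= 2 ^ n)%N -> (32 * k <= n)%N ->
  (B * 7 ^ (n - n %/ 8) <= 8 ^ n)%N -> (9 ^ k * c * B <= 2 ^ n)%N.
Proof.
move=> c64 kn B7.
have leq_expn2r (a b e : nat) : (a <= b)%N -> (a ^ e <= b ^ e)%N.
  by case: e => [//|e] ab; rewrite leq_exp2r.
rewrite -(leq_exp2r _ _ (_ : 0 < 64)%N) // -(@leq_pmul2r (7 ^ (56 * n))) ?expn_gt0 //.
rewrite !expnMn -expnM -mulnA.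
have k81 : (9 ^ (k * 64) <= 81 ^ n)%N.
  by rewrite -[81%N]/(9 ^ 2)%N -expnM; apply: leq_pexp2l => //; lia.
have B64 : (B ^ 64 * 7 ^ (56 * n) <= (8 ^ n) ^ 64)%N.
  apply: leq_trans (leq_expn2r _ _ 64 B7); rewrite expnMn -expnM leq_mul2l.
  by apply/orP; right; apply: leq_pexp2l => //; have := leq_divM n 8; lia.
apply: (leq_trans (leq_mul (leq_mul k81 c64) B64)).
rewrite -!expnM -[(n * 64)%N]mulnC !expnM -!expnMn.
by apply: leq_expn2r; lia.
Qed.

(* A word within distance n/8 of C is c + 1_A with c in C and |A| < n/8. *)
Lemma card_near_code (R : realType) n (C : {vspace word n}) (eps : R) :
  (0 < n)%N -> eps < 1/8 ->
  (#|[set x : word n | (dist_code R x C <= eps)%R]| <=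
   #|[set c : word n | c \in C]| * #|[set A : {set 'I_n} | (8 * #|A| < n)%N]|)%N.
Proof.
move=> n0 eps8; rewrite -cardsX.
pose flip (cA : word n * {set 'I_n}) : word n := cA.1 + \row_i (i \in cA.2)%:R.
apply: leq_trans (leq_imset_card flip _); apply: subset_leq_card.
apply/subsetP => x; rewrite inE => near.
set mu := \big[minn/n]_(c | c \in C) ham x c.
have mu8 : (8 * mu < n)%N.
  rewrite -(ltr_nat R) natrM.
  have : mu%:R / n%:R < (1 / 8 : R) by apply: le_lt_trans near eps8.
  by rewrite ltr_pdivrMr ?ltr0n // => h; lra.
have [c cC muE] : exists2 c, c \in C & mu = ham x c.
  have : mu = n \/ exists2 c, c \in C & mu = ham x c.
    apply: (big_ind (fun m => m = n \/ exists2 c, c \in C & m = ham x c)) => [|a b ha hb|c cC].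
    - by left.
    - by rewrite /minn; case: ifP.
    - by right; exists c.
  by case=> // mun; rewrite mun in mu8; lia.
apply/imsetP; exists (c, [set i | x ord0 i != c ord0 i]).
  by rewrite !inE cC /=; rewrite muE /ham in mu8.
by apply/matrixP => i j; rewrite /= !mxE inE (ord1 i) eq_sym F2_addr_neq.
Qed.

Lemma card_near_code_small (R : realType) n (C : {vspace word n}) (eps : R) k :
  (#|[set c : word n | c \in C]| ^ 64 <= 2 ^ n)%N -> (0 < k)%N -> (32 * k <= n)%N ->
  eps < 1/8 -> (9 ^ k * #|[set x : word n | (dist_code R x C <= eps)%R]| <= 2 ^ n)%N.
Proof.
move=> C64 k0 kn eps8; have n0 : (0 < n)%N by lia.
apply: leq_trans (card_near_arith C64 kn (card_small_subsets n)).
by rewrite -mulnA leq_mul2l card_near_code ?orbT.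
Qed.

Lemma acc_prob_bounds (R : realType) n (A : rand_alg R n) q x :
  valid_alg A q -> 0 <= acc_prob A x <= 1.
Proof.
move=> [Aq A1]; rewrite /acc_prob -[X in _ <= _ <= X]A1.
elim: A Aq {A1} => [|t A IH] /=; first by rewrite !big_nil lexx.
case/andP => /andP [t0 _] /IH /andP [ge0 le1]; rewrite !big_cons.
apply/andP; split; first by rewrite addr_ge0 ?mulr_ge0 ?ler0n.
by apply: lerD => //; case: (run t.2 x); rewrite ?mulr1 ?mulr0.
Qed.

Section PartialTester.
Variables (R : realType) (n : nat) (C : {vspace word n}) (C' : {set word n}).
Variables (q : nat) (eps : R) (A : rand_alg R n).
Hypotheses (A_valid : valid_alg A q) (C'C : {subset C' <= C}).
Hypothesis A_accepts : forall x, x \in C' -> 2/3 <= acc_prob A x.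
Hypothesis A_rejects : forall x, eps < dist_code R x C -> 2/3 <= 1 - acc_prob A x.

Let moment m x := (3 * acc_prob A x) ^+ m.
Let Cset := [set c : word n | c \in C].
Let near := [set x : word n | dist_code R x C <= eps].

Lemma sum_moment_code_ge m : #|C'|%:R * 2 ^+ m <= \sum_(x in Cset) moment m x.
Proof.
have moment_ge0 x : 0 <= moment m x.
  by rewrite exprn_ge0 // mulr_ge0 //; case/andP: (acc_prob_bounds x A_valid).
rewrite (bigID (mem C')) /=; apply: ler_wpDr; first exact: sumr_ge0.
rewrite (eq_bigl (mem C')) => [|x]; last first.
  by rewrite inE; apply/andP/idP => [[]//|xC']; split => //; apply: C'C.
rewrite mulr_natl -sumr_const; apply: ler_sum => x xC'.
by rewrite lerXn2r ?nnegrE //; have := A_accepts xC'; lra.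
Qed.

Lemma sum_moment_le m :
  \sum_(x in [set: word n]) moment m x <= 3 ^+ m * #|near|%:R + #|[set: word n]|%:R.
Proof.
apply: (@le_trans _ _ (\sum_(x in [set: word n]) ((if x \in near then 3 ^+ m else 0) + 1))).
  apply: ler_sum => x _; have /andP [p0 p1] := acc_prob_bounds x A_valid.
  have m3 : 0 <= 3 * acc_prob A x by rewrite mulr_ge0.
  case: ifPn => [_|]; last rewrite add0r.
    by apply: ler_wpDr => //; rewrite lerXn2r ?nnegrE //; lra.
  by rewrite inE -ltNge => /A_rejects far; apply: exprn_ile1 => //; lra.
rewrite big_split /= sumr_const -big_mkcondr /= sumr_const mulr_natr.
by rewrite (@eq_card _ _ near) // => x; rewrite unfold_in /= in_setT.
Qed.

Lemma card_tested_le G m :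
  has_dual_distance C G -> (m * q < G)%N -> (3 ^ m * #|near| <= 2 ^ n)%N ->
  (#|C'| * 2 ^ m <= 2 * #|Cset|)%N.
Proof.
move=> dualG mqG near_small.
have Aq : all (fun t : R * dtree n => (depth t.2 <= q)%N) A.
  by case: A_valid => Avalid _; apply: sub_all Avalid => t /andP [].
have comb : subcube_comb (m * q) (moment m).
  exact: subcube_combX (subcube_combZ 3 (subcube_comb_acc_prob Aq)).
have addC : {in Cset &, forall u v, u + v \in Cset}.
  by move=> u v; rewrite !inE; exact: memvD.
have addT : {in [set: word n] &, forall u v, u + v \in [set: word n]}.
  by move=> u v; rewrite !inE.
have avg := sum_subcube_comb addC addT
  (dual_distance_wise_independent dualG mqG) (@wise_independent_setT n _) comb.
have cardT : #|[set: word n]| = (2 ^ n)%N by rewrite cardsT card_mx card_Fp // mul1n.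
have N0 : (0 : R) < #|[set: word n]|%:R by rewrite cardT ltr0n expn_gt0.
rewrite -(ler_nat R) natrM natrX -(ler_pM2r N0).
apply: le_trans (ler_wpM2r (ltW N0) (sum_moment_code_ge m)) _.
rewrite avg natrM -mulrA mulrCA ler_wpM2l // (le_trans (sum_moment_le m)) //.
move: near_small; rewrite -cardT -(ler_nat R) natrM natrX; lra.
Qed.

End PartialTester.

Lemma expn64_le_of_powR (R : realType) n c :
  (c%:R <= (2 : R) `^ (n%:R / 64)) -> (c ^ 64 <= 2 ^ n)%N.
Proof.
move=> cn; rewrite -(ler_nat R) !natrX.
apply: le_trans (_ : _ <= ((2 : R) `^ (n%:R / 64)) ^+ 64) _.
  by rewrite lerXn2r // nnegrE ?ler0n ?powR_ge0.
rewrite -powR_mulrn ?powR_ge0 // -powRrM divfK ?pnatr_eq0 //.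
by rewrite powR_mulrn.
Qed.

Lemma entropy_unif (R : realType) (T : finType) (S : {set T}) :
  S != set0 -> entropy (unif R S) = log2 (#|S|%:R : R).
Proof.
move=> S0; have cR : (0 : R) < #|S|%:R by rewrite ltr0n card_gt0.
rewrite /entropy /unif.
rewrite (eq_bigr (fun x => if x \in S then #|S|%:R^-1 * log2 (#|S|%:R^-1) else 0)); last first.
  by move=> x _; case: (x \in S); rewrite ?eqxx // invr_eq0 gt_eqF.
rewrite -big_mkcond /= sumr_const /log2 lnV ?posrE // -mulrnAl -mulr_natl.
by rewrite mulrA mulfV ?gt_eqF // mul1r mulNr opprK.
Qed.

Lemma log2_le_sub (R : realType) (c' c k : nat) : (0 < c')%N -> (c' * 2 ^ k <= c)%N ->
  log2 (c'%:R : R) <= log2 (c%:R : R) - k%:R.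
Proof.
move=> c'0 c'c.
have ln2 : 0 < ln (2 : R) by apply: ln_gt0; lra.
have c'R : (0 : R) < c'%:R by rewrite ltr0n.
have cR : (0 : R) < c%:R.
  by rewrite ltr0n; apply: leq_trans c'c; rewrite muln_gt0 c'0 expn_gt0.
have : ln (c'%:R * 2 ^+ k : R) <= ln c%:R.
  by rewrite ler_ln ?posrE ?mulr_gt0 ?exprn_gt0 // -natrX -natrM ler_nat.
rewrite lnM ?posrE ?exprn_gt0 // lnXn // -[ln 2 *+ k]mulr_natr => lnc.
have ln2_neq0 : ln (2 : R) != 0 by rewrite gt_eqF.
rewrite /log2 lerBrDr -[k%:R](mulfK ln2_neq0) -mulrDl ler_pM2r ?invr_gt0 //.
by rewrite mulrC.
Qed.

Theorem lemma15 (R : realType) (n : nat) (C : {vspace word n}) (G : nat)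
  (C' : {set word n}) (q : nat) (eps : R) :
  has_dual_distance C G ->
  (#|[set c : word n | c \in C]|%:R <= (2 : R) `^ (n%:R / 64)) ->
  eps < 1/8 ->
  (0 < q)%N ->
  C' != set0 ->
  (forall x, x \in C' -> x \in C) ->
  partially_testable C C' q eps ->
  entropy (unif R C') <=
    log2 (#|[set c : word n | c \in C]|%:R : R) - ((G %/ (32 * q))%N)%:R.
Proof.
move=> dualG C64 eps8 q0 C'0 C'C [A [A_valid [A_accepts A_rejects]]].
set k := (G %/ (32 * q))%N.
rewrite entropy_unif //; apply: log2_le_sub; first by rewrite card_gt0.
have [->|k0] := posnP k.
  by rewrite muln1; apply: subset_leq_card; apply/subsetP => x /C'C; rewrite inE.
have Gn : (G <= n)%N.
  have [[y _ <-] _] := dualG.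
  by apply: leq_trans (max_card _) _; rewrite card_ord.
have kqG : (k * (32 * q) <= G)%N by apply: leq_divM.
have near_small :
    (3 ^ (2 * k) * #|[set x : word n | (dist_code R x C <= eps)%R]| <= 2 ^ n)%N.
  rewrite expnM; apply: card_near_code_small eps8 => //; last by nia.
  exact: expn64_le_of_powR C64.
have mqG : (2 * k * q < G)%N by nia.
have := card_tested_le A_valid C'C A_accepts A_rejects dualG mqG near_small.
have k2 : (2 <= 2 ^ k)%N by rewrite -{1}(expn1 2) leq_pexp2l.
rewrite mul2n -addnn expnD mulnA; nia.
Qed.
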